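(* There exist a finite group $G$ of order $2^7$ (namely $\texttt{SmallGroup}(128,560)$) and a core-free elementary abelian subgroup $H$ of $G$ of order $8$ such that $d_G(H)=3$ but $b(G,H)=4$; in particular there are no $x,y\in G$ with $H\cap H^x\cap H^y=1$.
   Context: Depth: for a finite group $G$, a subgroup $H$ and $m\geqslant 1$, let $(\mathbb{C}G)^{\otimes m}=\mathbb{C}G\otimes_{\mathbb{C}H}\cdots\otimes_{\mathbb{C}H}\mathbb{C}G$ ($m$ factors). For $n\geqslant 1$, the inclusion $\mathbb{C}H\subseteq\mathbb{C}G$ has depth $2n$ if $(\mathbb{C}G)^{\otimes(n+1)}$ is isomorphic, as a $(\mathbb{C}G,\mathbb{C}H)$-bimodule, to a direct summand of $\bigoplus_{i=1}^k(\mathbb{C}G)^{\otimes n}$ for some $k\geqslant 1$; it has depth $2n+1$ if the same holds for $(\mathbb{C}H,\mathbb{C}H)$-bimodules; it has depth $1$ if $\mathbb{C}G$ is isomorphic as a $(\mathbb{C}H,\mathbb{C}H)$-bimodule to a direct summand of $\bigoplus_{i=1}^k\mathbb{C}H$ for some $k\geqslant1$. The depth $d_G(H)$ is the least positive integer $n$ such that the inclusion has depth $n$. For core-free $H$ (i.e. $\bigcap_{g\in G}H^g=1$), $b(G,H)$ is the least $b$ such that there exist $x_1,\dots,x_b\in G$ with $\bigcap_{i=1}^b H^{x_i}=1$. $\texttt{SmallGroup}(128,560)$ refers to the group with that identifier in the GAP/Magma small groups library. *)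

From HB Require Import structures.
From mathcomp Require Import all_boot all_order all_algebra all_fingroup all_solvable all_field.
Set Implicit Arguments. Unset Strict Implicit. Unset Printing Implicit Defensive.
Import GRing.Theory.

(* The (CG,CH)-bimodule (CG)^{(x)m} = CG (x)_{CH} ... (x)_{CH} CG (m factors) *)
(* is modelled by its standard permutation basis: the set of orbits of         *)
(* H^{m-1} on the m-tuples of elements of G, where (h_1,...,h_{m-1}) sends     *)
(* (g_1,...,g_m) to (g_1 h_1, h_1^-1 g_2 h_2, ..., h_{m-1}^-1 g_m), i.e. the   *)
(* classes of the relation  x h (x) y = x (x) h y.  The left action of G       *)
(* multiplies the first entry on the left, the right action of H multiplies    *)
(* the last entry on the right.  Modules are over algC (algebraic complex      *)
(* numbers), matrices act on row vectors.                                      *)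

Section TensorBimodule.
Variable gT : finGroupType.
Local Open Scope group_scope.

Definition tens_rel (H : {set gT}) m (s t : m.-tuple gT) : bool :=
  [exists h : (m.-1).-tuple gT,
     all (fun x => x \in H) h &&
     [forall i : 'I_m,
        tnth t i == (if val i is k.+1 then nth 1 h k else 1)^-1
                      * tnth s i * nth 1 h i]].

Definition tens_basis (G H : {set gT}) m : {set {set m.-tuple gT}} :=
  [set [set t | tens_rel H s t] | s in [set s : m.-tuple gT | all (fun x => x \in G) s]].

Definition lact m (g : gT) (t : m.-tuple gT) : m.-tuple gT :=
  [tuple (if val i == 0%N then g * tnth t i else tnth t i) | i < m].
Definition ract m (h : gT) (t : m.-tuple gT) : m.-tuple gT :=
  [tuple (if (val i).+1 == m then tnth t i * h else tnth t i) | i < m].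

Definition tens_dim (G H : {set gT}) m := #|tens_basis G H m|.

Definition basis_perm_mx (G H : {set gT}) m
    (f : {set m.-tuple gT} -> {set m.-tuple gT}) : 'M[algC]_(tens_dim G H m) :=
  \matrix_(i, j) ((f (@enum_val _ (mem (tens_basis G H m)) i)
                    == @enum_val _ (mem (tens_basis G H m)) j)%:R)%R.

Definition tensL (G H : {set gT}) m (g : gT) : 'M[algC]_(tens_dim G H m) :=
  basis_perm_mx G H (fun O => lact g @: O).
Definition tensR (G H : {set gT}) m (h : gT) : 'M[algC]_(tens_dim G H m) :=
  basis_perm_mx G H (fun O => ract h @: O).

(* P (left action PL, right action PR) is isomorphic, as an (A,B)-bimodule   *)
(* (i.e. a (CA,CB)-bimodule), to a direct summand of Q^k for some k >= 1:    *)
(* there are bimodule maps F_i : P -> Q, E_i : Q -> P (i < k) with           *)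
(* sum_i E_i o F_i = id_P (split mono P -> Q^k).                             *)
Definition bimod_summand (A B : {set gT}) p q
    (PL PR : gT -> 'M[algC]_p) (QL QR : gT -> 'M[algC]_q) : Prop :=
  exists k : nat, (0 < k)%N /\
  exists (F : 'I_k -> 'M[algC]_(p, q)) (E : 'I_k -> 'M[algC]_(q, p)),
    (forall i x, x \in A ->
       (PL x *m F i = F i *m QL x)%R /\ (QL x *m E i = E i *m PL x)%R) /\
    (forall i y, y \in B ->
       (PR y *m F i = F i *m QR y)%R /\ (QR y *m E i = E i *m PR y)%R) /\
    (\sum_(i < k) F i *m E i = 1%:M)%R.

Definition has_depth (G H : {set gT}) (n : nat) : Prop :=
  match n with
  | 0 => False
  | 1 => bimod_summand H H (tensL G H 1) (tensR G H 1)
                           (tensL H H 1) (tensR H H 1)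
  | _ => let j := n./2 in
         if odd n then
           bimod_summand H H (tensL G H j.+1) (tensR G H j.+1)
                             (tensL G H j) (tensR G H j)
         else
           bimod_summand G H (tensL G H j.+1) (tensR G H j.+1)
                             (tensL G H j) (tensR G H j)
  end.

Definition depth_is (G H : {set gT}) (d : nat) : Prop :=
  has_depth G H d /\ forall n, (0 < n < d)%N -> ~ has_depth G H n.

Definition base_ok (G H : {set gT}) (b : nat) : Prop :=
  exists xs : b.-tuple gT,
    all (fun x => x \in G) xs /\ \bigcap_(x <- xs) (H :^ x) = [1 gT].

Definition base_size_is (G H : {set gT}) (b : nat) : Prop :=
  base_ok G H b /\ forall c, (0 < c < b)%N -> ~ base_ok G H c.

End TensorBimodule.

(* The (H,H)- and (G,H)-bimodules (CG)^(x)m are permutation modules, on the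
   tensor classes of m-tuples.

   Depth 3.  H is elementary abelian of order 8, so an (H,H)-bimodule is a
   module for the abelian group H x H, whose characters are the sign
   characters of a nondegenerate pairing on H.  If every character a of H x H
   is trivial on the stabiliser of some basis element d_a of a permutation
   bimodule Q, the a-isotypic projection q_a of d_a is nonzero, and any
   permutation bimodule P is a summand of a power of Q: for each basis element
   b of P and each a, with p the a-isotypic projection of b, take the rank-one
   maps F = p q_a^T and E = q_a p^T / (|q_a|^2 |H|^4); orthogonality of
   characters gives sum F E = 1.  For Q = CG the stabiliser of g is
   {(x, y) | x g y = g}, and a computation finds the elements d_a.

   Depth 1 and 2 fail.  For a character psi of H that is nontrivial but
   trivial on the right stabiliser of some g0, the element
   sum_(x in A, y in H) psi(y) x (x) y of C[A x H] kills the regular bimodule CA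
   (since sum psi = 0) but not the larger bimodule (its coefficient at the
   basis element of g0, resp. 1 (x) g0, counts stabilising pairs), whereas it
   would commute with the maps splitting a summand.

   Base size.  Computation shows H meets H^u and H^v nontrivially for all u, v,
   and that {1, b, c, c^2} is a base. *)

From Pilot Require Import Defs.
From HB Require Import structures.
From mathcomp Require Import all_boot all_order all_algebra all_fingroup all_solvable all_field.
From mathcomp.algebra_tactics Require Import ring.
Set Implicit Arguments. Unset Strict Implicit. Unset Printing Implicit Defensive.
Import GRing.Theory Num.Theory.

(** * Tensor classes *)

Section TensorClasses.
Variable gT : finGroupType.
Local Open Scope group_scope.
Implicit Types (G H : {group gT}) (x y g : gT).

Lemma lactM m x y (t : m.-tuple gT) : lact (x * y) t = lact x (lact y t).
Proof. by apply: eq_from_tnth => i; rewrite !tnth_mktuple; case: ifP; rewrite ?mulgA. Qed.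

Lemma lact1 m (t : m.-tuple gT) : lact 1 t = t.
Proof. by apply: eq_from_tnth => i; rewrite !tnth_mktuple; case: ifP; rewrite ?mul1g. Qed.

(* The bare name [ract] is MathComp's restricted action. *)
Lemma ractM m x y (t : m.-tuple gT) : Defs.ract (x * y) t = Defs.ract y (Defs.ract x t).
Proof. by apply: eq_from_tnth => i; rewrite !tnth_mktuple; case: ifP; rewrite ?mulgA. Qed.

Lemma ract1 m (t : m.-tuple gT) : Defs.ract 1 t = t.
Proof. by apply: eq_from_tnth => i; rewrite !tnth_mktuple; case: ifP; rewrite ?mulg1. Qed.

Lemma lact_ract m x y (t : m.-tuple gT) : lact x (Defs.ract y t) = Defs.ract y (lact x t).
Proof.
by apply: eq_from_tnth => i; rewrite !tnth_mktuple; do 2 case: ifP => _; rewrite ?mulgA.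
Qed.

Lemma tens_rel_lact H m g (s t : m.-tuple gT) :
  tens_rel H (lact g s) (lact g t) = tens_rel H s t.
Proof.
apply: eq_existsb => h; congr (_ && _); apply: eq_forallb => i.
rewrite !tnth_mktuple; case: ifP => // /eqP i0.
case: i i0 => [[|k] ki] //= _.
by rewrite invg1 !mul1g -mulgA (inj_eq (mulgI g)).
Qed.

Lemma tens_rel_ract H m g (s t : m.-tuple gT) :
  tens_rel H (Defs.ract g s) (Defs.ract g t) = tens_rel H s t.
Proof.
apply/existsP/existsP => -[h /andP[hH /forallP hf]]; exists h; rewrite hH /=;
  apply/forallP => i; have := hf i; rewrite !tnth_mktuple; case: ifP => // /eqP im;
  (have -> : nth 1 h i = 1 by rewrite nth_default // size_tuple -(congr1 predn im));
  rewrite !mulg1 !mulgA.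
  by move/eqP/mulIg/eqP.
by move/eqP->.
Qed.

Definition tens_class H m (s : m.-tuple gT) := [set t | tens_rel H s t].

Lemma lact_tens_class H m g (s : m.-tuple gT) :
  lact g @: tens_class H s = tens_class H (lact g s).
Proof.
apply/setP => t; rewrite inE; apply/imsetP/idP => [[t' ht' ->]|ht].
  by rewrite tens_rel_lact -inE.
exists (lact g^-1 t); last by rewrite -lactM mulgV lact1.
by rewrite inE -(tens_rel_lact H g) -lactM mulgV lact1.
Qed.

Lemma ract_tens_class H m g (s : m.-tuple gT) :
  Defs.ract g @: tens_class H s = tens_class H (Defs.ract g s).
Proof.
apply/setP => t; rewrite inE; apply/imsetP/idP => [[t' ht' ->]|ht].
  by rewrite tens_rel_ract -inE.
exists (Defs.ract g^-1 t); last by rewrite -ractM mulVg ract1.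
by rewrite inE -(tens_rel_ract H g) -ractM mulVg ract1.
Qed.

Lemma tens_basisP G H m (X : {set m.-tuple gT}) :
  reflect (exists2 s : m.-tuple gT, all (fun x => x \in G) s & X = tens_class H s)
          (X \in tens_basis G H m).
Proof.
apply: (iffP imsetP) => -[s hs ->]; exists s => //; first by move: hs; rewrite inE.
by rewrite inE.
Qed.

Definition lact_set m g (X : {set m.-tuple gT}) := lact g @: X.
Definition ract_set m g (X : {set m.-tuple gT}) := Defs.ract g @: X.

Lemma lact_set_basis G H m g (X : {set m.-tuple gT}) :
  g \in G -> X \in tens_basis G H m -> lact_set g X \in tens_basis G H m.
Proof.
move=> gG /tens_basisP[s /all_tnthP hs ->]; apply/tens_basisP.
exists (lact g s); last by rewrite /lact_set lact_tens_class.
by apply/all_tnthP => i; rewrite tnth_mktuple; case: ifP; rewrite ?groupM ?hs.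
Qed.

Lemma ract_set_basis G H m g (X : {set m.-tuple gT}) :
  g \in G -> X \in tens_basis G H m -> ract_set g X \in tens_basis G H m.
Proof.
move=> gG /tens_basisP[s /all_tnthP hs ->]; apply/tens_basisP.
exists (Defs.ract g s); last by rewrite /ract_set ract_tens_class.
by apply/all_tnthP => i; rewrite tnth_mktuple; case: ifP; rewrite ?groupM ?hs.
Qed.

Lemma lact_setM m x y (X : {set m.-tuple gT}) :
  lact_set x (lact_set y X) = lact_set (x * y) X.
Proof. by rewrite /lact_set -imset_comp; apply: eq_imset => t /=; rewrite lactM. Qed.

Lemma ract_setM m x y (X : {set m.-tuple gT}) :
  ract_set y (ract_set x X) = ract_set (x * y) X.
Proof. by rewrite /ract_set -imset_comp; apply: eq_imset => t /=; rewrite ractM. Qed.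

Lemma lact_set1 m (X : {set m.-tuple gT}) : lact_set 1 X = X.
Proof. by rewrite /lact_set (eq_imset _ (@lact1 m)) imset_id. Qed.

Lemma ract_set1 m (X : {set m.-tuple gT}) : ract_set 1 X = X.
Proof. by rewrite /ract_set (eq_imset _ (@ract1 m)) imset_id. Qed.

Lemma lact_ract_set m x y (X : {set m.-tuple gT}) :
  lact_set x (ract_set y X) = ract_set y (lact_set x X).
Proof. by rewrite /lact_set /ract_set -!imset_comp; apply: eq_imset => t /=; rewrite lact_ract. Qed.

Lemma tens_class1 H (s : 1.-tuple gT) : tens_class H s = [set s].
Proof.
apply/setP => t; rewrite !inE; apply/existsP/eqP => [[h /andP[_ /forallP hf]]|->].
  apply: eq_from_tnth => i; rewrite (ord1 i) (eqP (hf ord0)) /= invg1 mul1g.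
  by case: h {hf} => -[|? ?] //= _; rewrite mulg1.
by exists [tuple]; apply/forallP => i; rewrite (ord1 i) /= invg1 mul1g mulg1.
Qed.

Lemma tens_basis1P G H (X : {set 1.-tuple gT}) :
  reflect (exists2 g, g \in G & X = [set [tuple g]]) (X \in tens_basis G H 1).
Proof.
apply: (iffP (tens_basisP _ _ _)) => -[s]; last first.
  by move=> gG ->; exists [tuple s]; rewrite /= ?gG // tens_class1.
move=> /all_tnthP sG ->; exists (tnth s ord0); first exact: sG.
by rewrite tens_class1; congr [set _]; apply: eq_from_tnth => i; rewrite (ord1 i).
Qed.

Lemma act_set_tuple1 x y g :
  ract_set y (lact_set x [set [tuple g]]) = [set [tuple x * g * y]].
Proof.
rewrite /lact_set /ract_set !imset_set1; congr [set _].
by apply: eq_from_tnth => i; rewrite (ord1 i) !tnth_mktuple.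
Qed.

Lemma eq_set_tuple1 (a b : gT) : ([set [tuple a]] == [set [tuple b]]) = (a == b).
Proof.
apply/eqP/eqP => [e|->] //.
have : [tuple a] \in [set [tuple b]] by rewrite -e set11.
by move/set1P/(congr1 (fun t => tnth t ord0)).
Qed.

Lemma tens_rel2 H a b c e :
  tens_rel H [tuple a; b] [tuple c; e] = [exists h in H, (c == a * h) && (e == h^-1 * b)].
Proof.
apply/existsP/existsP => [[h /andP[hH /forallP hf]]|[h /and3P[hH /eqP-> /eqP->]]].
  case: h hH hf => -[|h0 [|? ?]] //= _ /andP[h0H _] hf; exists h0; rewrite h0H /=.
  move: (hf ord0) (hf (lift ord0 ord0)).
  by rewrite !(tnth_nth 1) /= invg1 mul1g mulg1 => -> ->.
exists [tuple h]; rewrite /= hH; apply/forallP => -[[|[|k]] ki] //=.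
  by rewrite !(tnth_nth 1) /= invg1 mul1g.
by rewrite !(tnth_nth 1) /= mulg1.
Qed.

Lemma tens_class2_eq H a b c e :
  (tens_class H [tuple a; b] == tens_class H [tuple c; e]) = tens_rel H [tuple a; b] [tuple c; e].
Proof.
have refl u v : tens_rel H [tuple u; v] [tuple u; v].
  by rewrite tens_rel2; apply/exists_inP; exists 1; rewrite ?invg1 ?mulg1 ?mul1g ?eqxx.
have sym u v u' v' :
    tens_rel H [tuple u; v] [tuple u'; v'] -> tens_rel H [tuple u'; v'] [tuple u; v].
  rewrite !tens_rel2 => /exists_inP[h hH /andP[/eqP-> /eqP->]].
  by apply/exists_inP; exists h^-1; rewrite ?groupV // invgK mulgK mulKVg !eqxx.
have trans u v u' v' u'' v'' : tens_rel H [tuple u; v] [tuple u'; v'] ->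
    tens_rel H [tuple u'; v'] [tuple u''; v''] -> tens_rel H [tuple u; v] [tuple u''; v''].
  rewrite !tens_rel2 => /exists_inP[h hH /andP[/eqP-> /eqP->]].
  move=> /exists_inP[k kH /andP[/eqP-> /eqP->]].
  by apply/exists_inP; exists (h * k); rewrite ?groupM // invMg !mulgA !eqxx.
apply/eqP/idP => [eq_ac|r].
  have : [tuple c; e] \in tens_class H [tuple c; e] by rewrite inE refl.
  by rewrite -eq_ac inE.
apply/setP => t; case: t => -[|u [|v []]] // tP.
rewrite (_ : Tuple tP = [tuple u; v]) ?inE; last exact: val_inj.
by apply/idP/idP; [apply: trans; apply: sym | apply: trans].
Qed.

Lemma tens_basis2 G H a b :
  a \in G -> b \in G -> tens_class H [tuple a; b] \in tens_basis G H 2.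
Proof. by move=> aG bG; apply/tens_basisP; exists [tuple a; b]; rewrite //= aG bG. Qed.

Lemma act_set_tuple2 H x y a b :
  ract_set y (lact_set x (tens_class H [tuple a; b])) = tens_class H [tuple x * a; b * y].
Proof.
rewrite /lact_set /ract_set lact_tens_class ract_tens_class; congr tens_class.
by apply: eq_from_tnth => -[[|[|k]] ki] //; rewrite !tnth_mktuple !(tnth_nth 1).
Qed.

End TensorClasses.

Record perm_biaction (gT : finGroupType) (T : finType) (H : {set gT})
    (B : {set {set T}}) (l r : gT -> {set T} -> {set T}) : Prop := PermBiaction {
  biact_l1 : forall X, l 1%g X = X;
  biact_r1 : forall X, r 1%g X = X;
  biact_lM : forall x y X, l x (l y X) = l (x * y)%g X;
  biact_rM : forall x y X, r y (r x X) = r (x * y)%g X;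
  biact_lr : forall x y X, l x (r y X) = r y (l x X);
  biact_lB : forall x X, x \in H -> X \in B -> l x X \in B;
  biact_rB : forall x X, x \in H -> X \in B -> r x X \in B
}.

Lemma tens_biaction (gT : finGroupType) (G H : {group gT}) m :
  H \subset G -> perm_biaction H (tens_basis G H m) (@lact_set gT m) (@ract_set gT m).
Proof.
move=> /subsetP sHG; split; [exact: lact_set1 | exact: ract_set1 | exact: lact_setM |
  exact: ract_setM | exact: lact_ract_set | | ].
- by move=> x X /sHG; apply: lact_set_basis.
- by move=> x X /sHG; apply: ract_set_basis.
Qed.

(** * Matrices indexed by basis sets *)

Section SetMatrices.
Local Open Scope ring_scope.
Implicit Types T U V : finType.

Definition setmx T U (A : {set {set T}}) (B : {set {set U}})
    (phi : {set T} -> {set U} -> algC) : 'M[algC]_(#|A|, #|B|) :=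
  \matrix_(i, j) phi (enum_val i) (enum_val j).

Definition setpermmx T (A : {set {set T}}) (f : {set T} -> {set T}) : 'M[algC]_#|A| :=
  setmx A A (fun X Y => (f X == Y)%:R).

Lemma setmx_mul T U V (A : {set {set T}}) (B : {set {set U}}) (C : {set {set V}}) phi psi :
  setmx A B phi *m setmx B C psi = setmx A C (fun X Z => \sum_(Y in B) phi X Y * psi Y Z).
Proof.
by apply/matrixP => i j; rewrite !mxE [RHS]big_enum_val; apply: eq_bigr => k _; rewrite !mxE.
Qed.

Lemma eq_setmx T U (A : {set {set T}}) (B : {set {set U}}) phi psi :
  (forall X Y, X \in A -> Y \in B -> phi X Y = psi X Y) -> setmx A B phi = setmx A B psi.
Proof. by move=> eq_phi; apply/matrixP => i j; rewrite !mxE eq_phi ?enum_valP. Qed.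

Lemma setmx_eq0 T U (A : {set {set T}}) (B : {set {set U}}) phi :
  (forall X Y, X \in A -> Y \in B -> phi X Y = 0) -> setmx A B phi = 0.
Proof. by move=> phi0; apply/matrixP => i j; rewrite !mxE phi0 ?enum_valP. Qed.

Lemma setmx_neq0 T (A : {set {set T}}) phi X0 :
  X0 \in A -> phi X0 X0 != 0 -> setmx A A phi != 0.
Proof.
move=> X0A nz_phi; apply/eqP => /matrixP/(_ (enum_rank_in X0A X0) (enum_rank_in X0A X0)).
by rewrite !mxE enum_rankK_in // => phi0; rewrite phi0 eqxx in nz_phi.
Qed.

Lemma setmx1 T (A : {set {set T}}) : setmx A A (fun X Y => (X == Y)%:R) = 1%:M.
Proof. by apply/matrixP => i j; rewrite !mxE (inj_eq enum_val_inj). Qed.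

Lemma scale_setmx T U (A : {set {set T}}) (B : {set {set U}}) c phi :
  c *: setmx A B phi = setmx A B (fun X Y => c * phi X Y).
Proof. by apply/matrixP => i j; rewrite !mxE. Qed.

Lemma sum_setmx (I : finType) (P : pred I) T U (A : {set {set T}}) (B : {set {set U}}) phi :
  \sum_(i | P i) setmx A B (phi i) = setmx A B (fun X Y => \sum_(i | P i) phi i X Y).
Proof. by apply/matrixP => i j; rewrite !mxE summxE; apply: eq_bigr => k _; rewrite mxE. Qed.

Lemma sum_delta_l T (A : {set {set T}}) X0 (g : {set T} -> algC) :
  X0 \in A -> \sum_(Y in A) (X0 == Y)%:R * g Y = g X0.
Proof.
move=> X0A; rewrite (bigD1 X0) //= eqxx mul1r big1 ?addr0 // => Y /andP[_ neY].
by rewrite eq_sym (negbTE neY) mul0r.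
Qed.

Lemma sum_delta_r T (A : {set {set T}}) X0 (g : {set T} -> algC) :
  X0 \in A -> \sum_(Y in A) g Y * (Y == X0)%:R = g X0.
Proof.
move=> X0A; rewrite (bigD1 X0) //= eqxx mulr1 big1 ?addr0 // => Y /andP[_ neY].
by rewrite (negbTE neY) mulr0.
Qed.

Lemma setpermmx_mul T U (A : {set {set T}}) (B : {set {set U}}) f phi :
  {in A, forall X, f X \in A} ->
  setpermmx A f *m setmx A B phi = setmx A B (fun X Y => phi (f X) Y).
Proof. by move=> fA; rewrite setmx_mul; apply: eq_setmx => X Y XA _; rewrite sum_delta_l ?fA. Qed.

Lemma setmx_mul_perm T U (A : {set {set T}}) (B : {set {set U}}) f f' phi :
  {in B, forall Y, f' Y \in B} -> (forall X Y, (f X == Y) = (X == f' Y)) ->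
  setmx A B phi *m setpermmx B f = setmx A B (fun X Y => phi X (f' Y)).
Proof.
move=> f'B ff'; rewrite setmx_mul; apply: eq_setmx => X Y _ YB.
by under eq_bigr => Z _ do rewrite ff'; rewrite sum_delta_r ?f'B.
Qed.

Lemma setpermmx_rank1 T U (A : {set {set T}}) (B : {set {set U}}) f g g'
    (u : {set T} -> algC) (v : {set U} -> algC) s :
  {in A, forall X, f X \in A} -> {in B, forall Y, g' Y \in B} ->
  (forall X Y, (g X == Y) = (X == g' Y)) ->
  (forall X, u (f X) = s * u X) -> (forall Y, v (g' Y) = s * v Y) ->
  setpermmx A f *m setmx A B (fun X Y => u X * v Y) =
  setmx A B (fun X Y => u X * v Y) *m setpermmx B g.
Proof.
move=> fA g'B gg' uf vg'; rewrite setpermmx_mul // (setmx_mul_perm _ _ g'B gg').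
by apply: eq_setmx => X Y _ _; rewrite uf vg' -mulrA mulrCA.
Qed.

End SetMatrices.

(** * Depth one and two *)

Section NotSummand.
Variable gT : finGroupType.
Local Open Scope ring_scope.

(* The maps splitting a summand commute with every element of C[A x B^op]. *)
Lemma no_bimod_summand (A B : {set gT}) p q (PL PR : gT -> 'M[algC]_p)
    (QL QR : gT -> 'M[algC]_q) (c : gT -> gT -> algC) :
  \sum_(x in A) \sum_(y in B) c x y *: (QL x *m QR y) = 0 ->
  \sum_(x in A) \sum_(y in B) c x y *: (PL x *m PR y) != 0 ->
  ~ bimod_summand A B PL PR QL QR.
Proof.
move=> cQ0 cP_neq0 [k [_ [F [E [FEl [FEr sumFE]]]]]].
set cP := \sum_(x in A) _ in cP_neq0; set cQ := \sum_(x in A) _ in cQ0.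
have cPF i : cP *m F i = F i *m cQ.
  rewrite /cP /cQ mulmx_suml mulmx_sumr; apply: eq_bigr => x xA.
  rewrite mulmx_suml mulmx_sumr; apply: eq_bigr => y yB.
  rewrite -scalemxAl -scalemxAr; congr (_ *: _).
  by rewrite -mulmxA (FEr i y yB).1 mulmxA (FEl i x xA).1 -mulmxA.
move/eqP: cP_neq0; apply; rewrite -[cP]mulmx1 -sumFE mulmx_sumr big1 // => i _.
by rewrite mulmxA cPF -mulmxA cQ0 mul0mx mulmx0.
Qed.

Lemma sum_setpermmx T (D : {set {set T}}) (A1 A2 : {set gT})
    (l r : gT -> {set T} -> {set T}) (c : gT -> gT -> algC) :
  (forall x X, x \in A1 -> X \in D -> l x X \in D) ->
  \sum_(x in A1) \sum_(y in A2) c x y *: (setpermmx D (l x) *m setpermmx D (r y)) =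
  setmx D D (fun X Z => \sum_(x in A1) \sum_(y in A2) c x y * (r y (l x X) == Z)%:R).
Proof.
move=> lD; rewrite -sum_setmx; apply: eq_bigr => x xA1; rewrite -sum_setmx.
by apply: eq_bigr => y _; rewrite setpermmx_mul ?scale_setmx // => X; apply: lD.
Qed.

Variables (A H : {group gT}) (psi : gT -> algC).
Hypothesis sHA : H \subset A.

Lemma sum_regular_eq0 g g' : g \in A -> g' \in A -> \sum_(y in H) psi y = 0 ->
  \sum_(x in A) \sum_(y in H) psi y * (x * g * y == g')%g%:R = 0.
Proof.
move=> gA g'A sum_psi0; rewrite exchange_big /= -[RHS]sum_psi0; apply: eq_bigr => y yH.
rewrite -mulr_sumr (bigD1 (g' * (g * y)^-1)%g) /=; last first.
  by rewrite groupM ?groupV ?groupM // (subsetP sHA).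
rewrite -(mulgA _ g y) mulgKV eqxx big1 ?addr0 ?mulr1 // => x /andP[_ neq_x].
by case: eqP => // exg; rewrite -exg -(mulgA x) mulgK eqxx in neq_x.
Qed.

Lemma sum_fixed_neq0 (R : gT -> gT -> bool) :
  R 1%g 1%g -> (forall x y, x \in A -> y \in H -> R x y -> psi y = 1) ->
  \sum_(x in A) \sum_(y in H) psi y * (R x y)%:R != 0.
Proof.
move=> R11 psiR.
have psiRE x y : x \in A -> y \in H -> psi y * (R x y)%:R = (R x y)%:R.
  by move=> xA yH; case: (boolP (R x y)) => [/(psiR x y xA yH)->|_]; rewrite ?mul1r ?mulr0.
under eq_bigr => x xA do under eq_bigr => y yH do rewrite psiRE //.
under eq_bigr => x xA do rewrite -natr_sum.
rewrite -natr_sum pnatr_eq0 -lt0n (bigD1 1%g) ?group1 //= (bigD1 1%g) ?group1 //= R11.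
by rewrite addnC addnS.
Qed.

End NotSummand.

Section ShallowDepth.
Local Open Scope ring_scope.
Variables (gT : finGroupType) (G H : {group gT}) (psi : gT -> algC) (g0 : gT).
Hypotheses (sHG : H \subset G) (g0G : g0 \in G) (sum_psi0 : \sum_(y in H) psi y = 0).
Hypothesis psi_stab : forall x y, x \in H -> y \in H -> (x * g0 * y)%g = g0 -> psi y = 1.

Lemma tensLE (A : {group gT}) m x :
  tensL A H m x = setpermmx (tens_basis A H m) (lact_set x).
Proof. by []. Qed.

Lemma tensRE (A : {group gT}) m y :
  tensR A H m y = setpermmx (tens_basis A H m) (ract_set y).
Proof. by []. Qed.

Lemma regular_annihilated (A : {group gT}) : H \subset A ->
  \sum_(x in A) \sum_(y in H) psi y *: (tensL A H 1 x *m tensR A H 1 y) = 0.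
Proof.
move=> sHA; under eq_bigr => x _ do under eq_bigr => y _ do rewrite tensLE tensRE.
rewrite sum_setpermmx => [|x X xA]; last exact: lact_set_basis.
apply: setmx_eq0 => _ _ /tens_basis1P[g gA ->] /tens_basis1P[g' g'A ->].
under eq_bigr => x _ do under eq_bigr => y _ do rewrite act_set_tuple1 eq_set_tuple1.
exact: sum_regular_eq0.
Qed.

Lemma not_has_depth1 : ~ has_depth G H 1.
Proof.
apply: (@no_bimod_summand _ _ _ _ _ _ _ _ _ (fun _ y => psi y)).
  exact: regular_annihilated.
under eq_bigr => x _ do under eq_bigr => y _ do rewrite tensLE tensRE.
rewrite sum_setpermmx => [|x X xH]; last by apply: lact_set_basis; apply: (subsetP sHG).
apply: (@setmx_neq0 _ _ _ [set [tuple g0]]); first by apply/tens_basis1P; exists g0.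
under eq_bigr => x _ do under eq_bigr => y _ do rewrite act_set_tuple1 eq_set_tuple1.
apply: sum_fixed_neq0 => [|x y xH yH /eqP]; [by rewrite mulg1 mul1g | exact: psi_stab].
Qed.

Lemma not_has_depth2 : ~ has_depth G H 2.
Proof.
apply: (@no_bimod_summand _ _ _ _ _ _ _ _ _ (fun _ y => psi y)).
  exact: regular_annihilated.
under eq_bigr => x _ do under eq_bigr => y _ do rewrite tensLE tensRE.
rewrite sum_setpermmx => [|x X xG]; last exact: lact_set_basis.
apply: (@setmx_neq0 _ _ _ (tens_class H [tuple 1%g; g0])); first exact: tens_basis2.
under eq_bigr => x _ do under eq_bigr => y _ do rewrite act_set_tuple2 tens_class2_eq tens_rel2.
apply: sum_fixed_neq0 => [|x y _ yH /exists_inP[h hH /andP[_ /eqP g0y]]].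
  by apply/exists_inP; exists 1%g; rewrite ?mulg1 ?invg1 ?mul1g ?eqxx.
by apply: (psi_stab (x := h^-1)%g); rewrite ?groupV // -mulgA -g0y.
Qed.

End ShallowDepth.

(** * Depth three over an elementary abelian 2-group *)

Section Pairing.
Local Open Scope ring_scope.

Lemma sum_eq0_flip (I : finType) (P : pred I) (f : I -> algC) (h : I -> I) :
  injective h -> (forall i, P (h i) = P i) -> (forall i, P i -> f (h i) = - f i) ->
  \sum_(i | P i) f i = 0.
Proof.
move=> h_inj Ph fh; set S := \sum_(i | P i) f i.
have SN : S = - S.
  rewrite {1}/S (reindex_inj h_inj) /= /S -sumrN.
  by apply: eq_big => [i|i Pi]; rewrite ?Ph // fh // -Ph.
have : S *+ 2 == 0 by rewrite mulr2n {1}SN addNr.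
by rewrite mulrn_eq0 => /eqP.
Qed.

Variables (gT : finGroupType) (H : {group gT}) (beta : gT -> gT -> bool).
Hypothesis betaMl : forall a a' x, a \in H -> a' \in H -> x \in H ->
  beta (a * a')%g x = beta a x (+) beta a' x.
Hypothesis betaMr : forall a x x', a \in H -> x \in H -> x' \in H ->
  beta a (x * x')%g = beta a x (+) beta a x'.
Hypothesis beta_nondeg : forall x x', x \in H -> x' \in H -> x != x' ->
  exists2 a, a \in H & beta a x != beta a x'.

Lemma pairing_invg x : x \in H -> x^-1%g = x.
Proof.
move=> xH; apply/eqP; rewrite eq_invg_mul; apply: contraT.
move=> /(beta_nondeg (groupM xH xH) (group1 H)).
case=> a aH; have a11 : beta a 1%g = false.
  by apply/negbTE; rewrite -[in beta a 1%g](mulg1 1%g) betaMr ?group1 // addbb.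
by rewrite betaMr // addbb a11.
Qed.

Lemma sum_sign_pairing x x' : x \in H -> x' \in H ->
  \sum_(a in H) ((-1) ^+ beta a x * (-1) ^+ beta a x' : algC) = #|H|%:R * (x == x')%:R.
Proof.
move=> xH x'H; have [<-|neq_x] := eqVneq x x'.
  by rewrite mulr1 -sumr_const; apply: eq_bigr => a _; rewrite -expr2 sqrr_sign.
rewrite mulr0; have [a0 a0H ne_a0] := beta_nondeg xH x'H neq_x.
apply: (sum_eq0_flip (h := mulg a0)) => [|a|a aH]; first exact: mulgI.
  by rewrite /= groupMl.
rewrite /= !betaMl // !signr_addb mulrACA -signr_addb.
by case: (beta a0 x) (beta a0 x') ne_a0 => -[] //= _; rewrite expr1 expr0 ?mulr1 ?mul1r mulN1r.
Qed.

Lemma sum_sign_pairing_eq0 a y0 : a \in H -> y0 \in H -> beta a y0 ->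
  \sum_(y in H) ((-1) ^+ beta a y : algC) = 0.
Proof.
move=> aH y0H ay0; apply: (sum_eq0_flip (h := mulg y0)) => [|y|y yH]; first exact: mulgI.
  by rewrite /= groupMl.
by rewrite /= betaMr // ay0 signr_addb expr1 mulN1r.
Qed.

Local Notation HxH := (setX H H).

Definition pair_char (a w : gT * gT) : algC := (-1) ^+ beta a.1 w.1 * (-1) ^+ beta a.2 w.2.

Lemma pair_char_real a w : pair_char a w \is Num.real.
Proof. by rewrite rpredM ?rpredX ?rpredN ?rpred1. Qed.

Lemma sum_setX (F : gT * gT -> algC) :
  \sum_(w in HxH) F w = \sum_(x in H) \sum_(y in H) F (x, y).
Proof.
rewrite (pair_big_dep (mem H) (fun _ => mem H) (fun x y => F (x, y))) /=.
by apply: eq_big => [[x y]|[]]; rewrite ?in_setX.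
Qed.

Lemma pair_char_orthogonal w w' : w \in HxH -> w' \in HxH ->
  \sum_(a in HxH) pair_char a w * pair_char a w' = (#|H| ^ 2)%:R * (w == w')%:R.
Proof.
case: w w' => [x y] [x' y'] /setXP[xH yH] /setXP[x'H y'H]; rewrite sum_setX.
under eq_bigr => a1 _ do under eq_bigr => a2 _ do rewrite /pair_char /= mulrACA.
rewrite -big_distrlr /= !sum_sign_pairing // xpair_eqE.
by case: (x == x'); case: (y == y'); rewrite /= ?mulr1 ?mulr0 ?mul0r ?natrX ?expr2.
Qed.

Section Isotypic.
Variables (T : finType) (B : {set {set T}}) (l r : gT -> {set T} -> {set T}).
Hypothesis lrB : perm_biaction H B l r.

Definition biact (w : gT * gT) (X : {set T}) := r w.2 (l w.1 X).

Lemma biact_eq_l x X Y : (l x X == Y) = (X == l x^-1%g Y).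
Proof.
by apply/eqP/eqP => [<-|->]; rewrite (biact_lM lrB) ?mulVg ?mulgV (biact_l1 lrB).
Qed.

Lemma biact_eq_r y X Y : (r y X == Y) = (X == r y^-1%g Y).
Proof.
by apply/eqP/eqP => [<-|->]; rewrite (biact_rM lrB) ?mulVg ?mulgV (biact_r1 lrB).
Qed.

Lemma sum_biact_eq1 w X : w \in HxH -> X \in B -> \sum_(b in B) (biact w b == X)%:R = 1 :> algC.
Proof.
case: w => [w1 w2] /setXP[w1H w2H] XB.
under eq_bigr => b _ do rewrite /biact biact_eq_r biact_eq_l -[_%:R]mul1r.
by rewrite sum_delta_r // (biact_lB lrB) ?(biact_rB lrB) ?groupV.
Qed.

(* |H|^2 times the coefficient of X in the projection of b to the isotypic
   component of the character a of H x H. *)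
Definition iso_coef (a : gT * gT) (b X : {set T}) : algC :=
  \sum_(w in HxH) pair_char a w * (biact w b == X)%:R.

Lemma iso_coef_l a b X x : a \in HxH -> x \in H ->
  iso_coef a b (l x X) = (-1) ^+ beta a.1 x * iso_coef a b X.
Proof.
case: a => [a1 a2] /setXP[a1H a2H] xH; rewrite /iso_coef mulr_sumr.
rewrite (reindex_inj (h := fun w => ((x * w.1)%g, w.2))); last first.
  by move=> [u v] [u' v'] /= [/mulgI-> ->].
apply: eq_big => [[u v]|[u v] /setXP[/= uH vH]]; first by rewrite !in_setX /= groupMl.
have e : (l x (r v (l u b)) == l x X) = (r v (l u b) == X).
  by rewrite biact_eq_l (biact_lM lrB) mulVg (biact_l1 lrB).
rewrite /pair_char /biact /= -(biact_lM lrB) -(biact_lr lrB) e.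
have {}uH : u \in H by rewrite -(groupMl _ xH).
by rewrite betaMr // signr_addb !mulrA.
Qed.

Lemma iso_coef_r a b X y : a \in HxH -> y \in H ->
  iso_coef a b (r y X) = (-1) ^+ beta a.2 y * iso_coef a b X.
Proof.
case: a => [a1 a2] /setXP[a1H a2H] yH; rewrite /iso_coef mulr_sumr.
rewrite (reindex_inj (h := fun w => (w.1, (w.2 * y)%g))); last first.
  by move=> [u v] [u' v'] /= [-> /mulIg->].
apply: eq_big => [[u v]|[u v] /setXP[/= uH vH]]; first by rewrite !in_setX /= groupMr.
have e : (r y (r v (l u b)) == r y X) = (r v (l u b) == X).
  by rewrite biact_eq_r (biact_rM lrB) mulgV (biact_r1 lrB).
have {}vH : v \in H by rewrite -(groupMr _ yH).
rewrite /pair_char /biact /= -(biact_rM lrB) e betaMr // signr_addb.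
by rewrite !mulrA; congr (_ * _); rewrite mulrC mulrA.
Qed.

Lemma iso_coef_real a b X : iso_coef a b X \is Num.real.
Proof. by rewrite rpred_sum // => w _; rewrite rpredM ?pair_char_real ?realn. Qed.

End Isotypic.

Section Summand.
Variables (TP TQ : finType) (BP : {set {set TP}}) (BQ : {set {set TQ}}).
Variables (lP rP : gT -> {set TP} -> {set TP}) (lQ rQ : gT -> {set TQ} -> {set TQ}).
Hypotheses (PB : perm_biaction H BP lP rP) (QB : perm_biaction H BQ lQ rQ).
Hypothesis chars_in_Q : forall a, a \in HxH ->
  exists2 Y, Y \in BQ & forall w, w \in HxH -> biact lQ rQ w Y = Y -> pair_char a w = 1.

Let dQ a : {set TQ} :=
  odflt set0 [pick Y in BQ | [forall w in HxH, (biact lQ rQ w Y == Y) ==> (pair_char a w == 1)]].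

Lemma dQP a : a \in HxH ->
  dQ a \in BQ /\ forall w, w \in HxH -> biact lQ rQ w (dQ a) = dQ a -> pair_char a w = 1.
Proof.
move=> aHH; rewrite /dQ; case: pickP => [Y /andP[YB /forall_inP stab] | none] /=.
  by split=> // w wHH wY; apply/eqP; move/implyP: (stab w wHH); apply; apply/eqP.
have [Y YB stab] := chars_in_Q aHH; move/(_ Y): none; rewrite YB /=.
by move/negbT/forall_inPn => -[w wHH]; rewrite negb_imply => /andP[/eqP/stab-> //]; rewrite eqxx.
Qed.

Let pP a b X := iso_coef lP rP a b X.
Let qQ a Y := iso_coef lQ rQ a (dQ a) Y.
Let normQ a := \sum_(Y in BQ) qQ a Y * qQ a Y.
Let K : algC := (#|H| ^ 4)%:R.

Lemma K_neq0 : K != 0.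
Proof. by rewrite pnatr_eq0 -lt0n expn_gt0 cardG_gt0. Qed.

Lemma qQ_self_neq0 a : a \in HxH -> qQ a (dQ a) != 0.
Proof.
move=> aHH; have [_ stab] := dQP aHH.
have -> : qQ a (dQ a) = \sum_(w in HxH) ((biact lQ rQ w (dQ a) == dQ a)%:R : algC).
  by apply: eq_bigr => w wHH; case: eqP => [/(stab w wHH)->|_]; rewrite ?mul1r ?mulr0.
rewrite -natr_sum pnatr_eq0 -lt0n (bigD1 (1, 1)%g) ?inE ?group1 //=.
by rewrite /biact /= (biact_l1 QB) (biact_r1 QB) eqxx.
Qed.

Lemma normQ_neq0 a : a \in HxH -> normQ a != 0.
Proof.
move=> aHH; apply/eqP => nQ0.
have sqr_ge0 Y : Y \in BQ -> 0 <= qQ a Y * qQ a Y.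
  by move=> _; rewrite -expr2 -real_normK ?iso_coef_real // exprn_ge0 ?normr_ge0.
have /eqP := psumr_eq0P sqr_ge0 nQ0 (dQP aHH).1.
by rewrite mulf_eq0 orbb (negbTE (qQ_self_neq0 aHH)).
Qed.

Lemma sum_iso_coef_sqr b X X' :
  \sum_(a in HxH) pP a b X * pP a b X' =
  (#|H| ^ 2)%:R * \sum_(w in HxH) (biact lP rP w b == X)%:R * (biact lP rP w b == X')%:R.
Proof.
have pP2 a : pP a b X * pP a b X' = \sum_(w in HxH) \sum_(w' in HxH)
    (pair_char a w * (biact lP rP w b == X)%:R) * (pair_char a w' * (biact lP rP w' b == X')%:R).
  by rewrite /pP /iso_coef big_distrlr.
under eq_bigr => a _ do rewrite pP2.
rewrite exchange_big mulr_sumr; apply: eq_bigr => w wHH; rewrite exchange_big /=.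
under eq_bigr => w' w'HH do rewrite (eq_bigr _ (fun a _ => mulrACA _ _ _ _)) -mulr_suml.
under eq_bigr => w' w'HH do rewrite pair_char_orthogonal // mulrCA.
rewrite (bigD1 w) //= eqxx mulr1 big1 ?addr0 => [|w' /andP[_ ne_w']].
  by rewrite mulrCA.
by rewrite [w == w']eq_sym (negbTE ne_w') mulr0 mul0r mulr0.
Qed.

Lemma sum_iso_coef_sqr_basis X X' : X \in BP -> X' \in BP ->
  \sum_(b in BP) \sum_(a in HxH) pP a b X * pP a b X' = K * (X == X')%:R.
Proof.
move=> XB X'B; under eq_bigr => b _ do rewrite sum_iso_coef_sqr.
rewrite -mulr_sumr exchange_big /=.
have eqX w b : ((biact lP rP w b == X)%:R * (biact lP rP w b == X')%:R : algC) =
    (biact lP rP w b == X)%:R * (X == X')%:R.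
  by case: eqP => [->|]; rewrite ?mul0r.
under eq_bigr => w wHH do
  rewrite (eq_bigr _ (fun b _ => eqX w b)) -mulr_suml (sum_biact_eq1 PB) // mul1r.
by rewrite sumr_const cardsX -[_ *+ (_ * _)]mulr_natl mulrA -natrM mulnn -expnD.
Qed.

Let IT := ({set TP} * (gT * gT))%type.
Let used (t : IT) := (t.1 \in BP) && (t.2 \in HxH).

(* The maps F and E of the proof idea, for the pair t = (b, a). *)
Definition summandF (t : IT) : 'M[algC]_(#|BP|, #|BQ|) :=
  if used t then setmx BP BQ (fun X Y => pP t.2 t.1 X * qQ t.2 Y) else 0.

Definition summandE (t : IT) : 'M[algC]_(#|BQ|, #|BP|) :=
  if used t then setmx BQ BP (fun Y X => qQ t.2 Y * (pP t.2 t.1 X / (normQ t.2 * K))) else 0.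

Lemma summand_l t x : x \in H ->
  setpermmx BP (lP x) *m summandF t = summandF t *m setpermmx BQ (lQ x) /\
  setpermmx BQ (lQ x) *m summandE t = summandE t *m setpermmx BP (lP x).
Proof.
move=> xH; rewrite /summandF /summandE.
case: ifP => [/andP[_ aHH]|_]; last by split; rewrite mulmx0 mul0mx.
have xVH := groupVr xH; split.
  apply: (setpermmx_rank1 (g' := lQ x^-1%g) (s := (-1) ^+ beta t.2.1 x)).
  - by move=> X; apply: (biact_lB PB).
  - by move=> Y; apply: (biact_lB QB).
  - exact: biact_eq_l QB x.
  - by move=> X; rewrite /pP (iso_coef_l PB).
  - by move=> Y; rewrite /qQ (iso_coef_l QB) // pairing_invg.
apply: (setpermmx_rank1 (g' := lP x^-1%g) (s := (-1) ^+ beta t.2.1 x)).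
- by move=> Y; apply: (biact_lB QB).
- by move=> X; apply: (biact_lB PB).
- exact: biact_eq_l PB x.
- by move=> Y; rewrite /qQ (iso_coef_l QB).
- by move=> X; rewrite /pP (iso_coef_l PB) // pairing_invg // mulrA.
Qed.

Lemma summand_r t y : y \in H ->
  setpermmx BP (rP y) *m summandF t = summandF t *m setpermmx BQ (rQ y) /\
  setpermmx BQ (rQ y) *m summandE t = summandE t *m setpermmx BP (rP y).
Proof.
move=> yH; rewrite /summandF /summandE.
case: ifP => [/andP[_ aHH]|_]; last by split; rewrite mulmx0 mul0mx.
have yVH := groupVr yH; split.
  apply: (setpermmx_rank1 (g' := rQ y^-1%g) (s := (-1) ^+ beta t.2.2 y)).
  - by move=> X; apply: (biact_rB PB).
  - by move=> Y; apply: (biact_rB QB).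
  - exact: biact_eq_r QB y.
  - by move=> X; rewrite /pP (iso_coef_r PB).
  - by move=> Y; rewrite /qQ (iso_coef_r QB) // pairing_invg.
apply: (setpermmx_rank1 (g' := rP y^-1%g) (s := (-1) ^+ beta t.2.2 y)).
- by move=> Y; apply: (biact_rB QB).
- by move=> X; apply: (biact_rB PB).
- exact: biact_eq_r PB y.
- by move=> Y; rewrite /qQ (iso_coef_r QB).
- by move=> X; rewrite /pP (iso_coef_r PB) // pairing_invg // mulrA.
Qed.

Lemma summandFE t : summandF t *m summandE t =
  if used t then setmx BP BP (fun X X' => pP t.2 t.1 X * pP t.2 t.1 X' / K) else 0.
Proof.
rewrite /summandF /summandE; case: ifP => [/andP[_ aHH]|_]; last by rewrite mul0mx.
rewrite setmx_mul; apply: eq_setmx => X X' _ _.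
set p := pP _ _ X; set p' := pP _ _ X'.
have regroup Y : p * qQ t.2 Y * (qQ t.2 Y * (p' / (normQ t.2 * K))) =
    p * (p' / (normQ t.2 * K)) * (qQ t.2 Y * qQ t.2 Y) by ring.
under eq_bigr => Y _ do rewrite regroup; rewrite -mulr_sumr -/(normQ t.2).
by field; rewrite normQ_neq0 // pnatr_eq0 -lt0n cardG_gt0.
Qed.

Lemma sum_summandFE : \sum_(t : IT) summandF t *m summandE t = 1%:M.
Proof.
rewrite (eq_bigr _ (fun t _ => summandFE t)) -big_mkcond /=.
rewrite -(pair_big_dep (mem BP) (fun _ => mem HxH)
  (fun b a => setmx BP BP (fun X X' => pP a b X * pP a b X' / K))).
rewrite /= -setmx1; under eq_bigr => b _ do rewrite sum_setmx; rewrite sum_setmx.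
apply: eq_setmx => X X' XB X'B; under eq_bigr => b _ do rewrite -mulr_suml.
by rewrite -mulr_suml sum_iso_coef_sqr_basis // mulrC mulKf ?K_neq0.
Qed.

Theorem perm_bimod_summand :
  bimod_summand H H (fun x => setpermmx BP (lP x)) (fun y => setpermmx BP (rP y))
                    (fun x => setpermmx BQ (lQ x)) (fun y => setpermmx BQ (rQ y)).
Proof.
exists #|[set: IT]|; split; first by apply/card_gt0P; exists (set0, (1, 1))%g; rewrite inE.
exists (fun i => summandF (enum_val i)), (fun i => summandE (enum_val i)).
split; [by move=> i x /summand_l | split; [by move=> i y /summand_r |]].
rewrite -(big_enum_val (fun t => summandF t *m summandE t)) -[RHS]sum_summandFE.
by apply: eq_bigl => t; rewrite inE.
Qed.

End Summand.

End Pairing.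

Section DepthThree.
Variables (gT : finGroupType) (G H : {group gT}) (beta : gT -> gT -> bool).
Hypothesis sHG : H \subset G.
Hypothesis betaMl : forall a a' x, a \in H -> a' \in H -> x \in H ->
  beta (a * a')%g x = beta a x (+) beta a' x.
Hypothesis betaMr : forall a x x', a \in H -> x \in H -> x' \in H ->
  beta a (x * x')%g = beta a x (+) beta a x'.
Hypothesis beta_nondeg : forall x x', x \in H -> x' \in H -> x != x' ->
  exists2 a, a \in H & beta a x != beta a x'.
Hypothesis chars_in_G : forall a, a \in setX H H ->
  exists2 g, g \in G & forall x y, x \in H -> y \in H -> (x * g * y)%g = g ->
    pair_char beta a (x, y) = 1%R.

Theorem has_depth3 : has_depth G H 3.
Proof.
apply: (perm_bimod_summand betaMl betaMr beta_nondeg (tens_biaction 2 sHG) (tens_biaction 1 sHG)).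
move=> a /chars_in_G[g gG stab]; exists [set [tuple g]]; first by apply/tens_basis1P; exists g.
move=> [x y] /setXP[xH yH]; rewrite /biact act_set_tuple1 => /eqP.
by rewrite eq_set_tuple1 => /eqP/stab; apply.
Qed.

End DepthThree.

(** * The group SmallGroup(128,560) *)

(* Permutations of [0, 16) as lists of images; [pmul p q] applies p first. *)
Definition pone : seq nat := iota 0 16.
Definition pmul (p q : seq nat) : seq nat := [seq nth 0 q (nth 0 p i) | i <- iota 0 16].
Definition pinv (p : seq nat) : seq nat := [seq index i p | i <- iota 0 16].
Definition is_perm16 (p : seq nat) : bool := perm_eq p pone.

Lemma is_perm16_size p : is_perm16 p -> size p = 16.
Proof. by move/perm_size; rewrite size_iota. Qed.

Lemma is_perm16_nth p i : is_perm16 p -> i < 16 -> nth 0 p i < 16.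
Proof.
move=> pP i16; have : nth 0 p i \in p by rewrite mem_nth // is_perm16_size.
by rewrite (perm_mem pP) mem_iota.
Qed.

Lemma pmulA p q r : is_perm16 p -> pmul (pmul p q) r = pmul p (pmul q r).
Proof.
move=> pP; apply/eq_in_map => i; rewrite mem_iota /= => i16.
by rewrite !(nth_map 0) ?nth_iota ?size_iota ?is_perm16_nth.
Qed.

Lemma pmul1p p : is_perm16 p -> pmul pone p = p.
Proof. by move=> pP; rewrite -[RHS](mkseq_nth 0) is_perm16_size. Qed.

Lemma pmulp1 p : is_perm16 p -> pmul p pone = p.
Proof.
move=> pP; rewrite -[RHS](mkseq_nth 0) is_perm16_size //.
by apply/eq_in_map => i; rewrite mem_iota /= => i16; rewrite nth_iota ?is_perm16_nth.
Qed.

Definition span_step (gens S : seq (seq nat)) : seq (seq nat) :=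
  undup (S ++ [seq pmul s g | s <- S, g <- gens]).

Definition span (n : nat) (gens : seq (seq nat)) : seq (seq nat) :=
  iter n (span_step gens) [:: pone].
Arguments span : simpl never.

Lemma span_mul_closed n gens p q :
  all is_perm16 (span n gens) ->
  all (fun s => all (fun g => pmul s g \in span n gens) gens) (span n gens) ->
  p \in span n gens -> q \in span n gens -> pmul p q \in span n gens.
Proof.
move=> S_perm S_mulg pS; have pP := allP S_perm p pS.
suff IH k q' : k <= n -> q' \in iter k (span_step gens) [:: pone] -> pmul p q' \in span n gens.
  exact: IH.
elim: k q' => [|k IHk] q' kn /=; first by rewrite mem_seq1 => /eqP->; rewrite pmulp1.
rewrite mem_undup mem_cat => /orP[qk|/allpairsP[[s g] [sk gG ->]]].
  exact: IHk q' (ltnW kn) qk.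
by rewrite -pmulA //; apply: (allP (allP S_mulg _ (IHk s (ltnW kn) sk))).
Qed.

Definition ga := [:: 0; 1; 3; 2; 4; 5; 7; 6; 8; 9; 11; 10; 13; 12; 14; 15].
Definition gb := [:: 2; 3; 0; 1; 6; 7; 4; 5; 10; 11; 8; 9; 15; 14; 13; 12].
Definition gc := [:: 8; 9; 10; 11; 12; 13; 14; 15; 6; 7; 5; 4; 3; 2; 0; 1].
Definition h1 := [:: 0; 1; 2; 3; 4; 5; 6; 7; 9; 8; 11; 10; 13; 12; 15; 14].
Definition h2 := [:: 0; 1; 2; 3; 5; 4; 7; 6; 8; 9; 10; 11; 13; 12; 15; 14].

(* G is generated by ga, gb, gc (its Cayley graph has diameter 8) and H by
   h1, h2, ga.  Their element lists are computed once and stored as literals,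
   which [simpl] must never unfold. *)
Arguments pmul : simpl never.
Arguments pinv : simpl never.

Definition Gelems := Eval vm_compute in span 8 [:: ga; gb; gc].
Definition Hperms := Eval vm_compute in span 3 [:: h1; h2; ga].
Arguments Gelems : simpl never.
Arguments Hperms : simpl never.

Lemma Gelems_span : Gelems = span 8 [:: ga; gb; gc].
Proof. by vm_compute. Qed.

Lemma Gelems_uniq : uniq Gelems. Proof. by vm_compute. Qed.
Lemma size_Gelems : size Gelems = 128. Proof. by vm_compute. Qed.
Lemma Gelems_perm : all is_perm16 Gelems. Proof. by vm_compute. Qed.
Lemma Gelems_one : pone \in Gelems. Proof. by vm_compute. Qed.

Lemma Gelems_mulg : all (fun s => all (fun g => pmul s g \in Gelems) [:: ga; gb; gc]) Gelems.
Proof. by vm_compute. Qed.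

Lemma Gelems_inv : all (fun p => (pinv p \in Gelems) && (pmul (pinv p) p == pone)) Gelems.
Proof. by vm_compute. Qed.

Lemma Gelems_mul p q : p \in Gelems -> q \in Gelems -> pmul p q \in Gelems.
Proof.
have := @span_mul_closed 8 [:: ga; gb; gc] p q; rewrite -Gelems_span.
exact: (fun closed => closed Gelems_perm Gelems_mulg).
Qed.

Lemma Gelems_invP p : p \in Gelems -> pinv p \in Gelems.
Proof. by move/(allP Gelems_inv)/andP=> []. Qed.

Lemma pmulVp p : p \in Gelems -> pmul (pinv p) p = pone.
Proof. by move/(allP Gelems_inv)/andP=> [_ /eqP]. Qed.

Definition G128 := seq_sub Gelems.
HB.instance Definition _ := Finite.on G128.

Definition g128_mul (x y : G128) : G128 := SeqSub (Gelems_mul (ssvalP x) (ssvalP y)).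
Definition g128_one : G128 := SeqSub Gelems_one.
Definition g128_inv (x : G128) : G128 := SeqSub (Gelems_invP (ssvalP x)).

Lemma g128_mulA : associative g128_mul.
Proof. by move=> x y z; apply: val_inj; rewrite /= pmulA // (allP Gelems_perm _ (ssvalP x)). Qed.

Lemma g128_mul1 : left_id g128_one g128_mul.
Proof. by move=> x; apply: val_inj; rewrite /= pmul1p // (allP Gelems_perm _ (ssvalP x)). Qed.

Lemma g128_mulV : left_inverse g128_one g128_inv g128_mul.
Proof. by move=> x; apply: val_inj; rewrite /= pmulVp // ssvalP. Qed.

HB.instance Definition _ := Finite_isGroup.Build G128 g128_mulA g128_mul1 g128_mulV.

Lemma card_G128 : #|[set: G128]| = 128.
Proof. by rewrite cardsT card_seq_sub -?size_Gelems //; apply: Gelems_uniq. Qed.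

Local Open Scope group_scope.

Definition g128 (p : seq nat) : G128 := insubd (1 : G128) p.
Arguments g128 : simpl never.

Lemma val_g128 p : p \in Gelems -> val (g128 p) = p.
Proof. exact: insubdK. Qed.

Lemma val_mulg (x y : G128) : val (x * y) = pmul (val x) (val y). Proof. by []. Qed.
Lemma val_oneg : val (1 : G128) = pone. Proof. by []. Qed.

Lemma Hperms_sub : all (fun p => p \in Gelems) Hperms. Proof. by vm_compute. Qed.
Lemma Hperms_uniq : uniq Hperms. Proof. by vm_compute. Qed.
Lemma size_Hperms : size Hperms = 8. Proof. by vm_compute. Qed.
Lemma Hperms_one : pone \in Hperms. Proof. by vm_compute. Qed.

Lemma Hperms_elementary : all (fun x => all (fun y =>
  [&& pmul x y \in Hperms, pmul x y == pmul y x & pmul x x == pone]) Hperms) Hperms.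
Proof. by vm_compute. Qed.

Definition H8_set : {set G128} := [set x | val x \in Hperms].

Lemma mem_H8 x : (x \in H8_set) = (val x \in Hperms).
Proof. by rewrite inE. Qed.

Lemma group_set_H8 : group_set H8_set.
Proof.
apply/group_setP; split=> [|x y]; rewrite !mem_H8 ?val_oneg ?Hperms_one // => xH yH.
by case/and3P: (allP (allP Hperms_elementary _ xH) _ yH).
Qed.

Canonical H8 := Group group_set_H8.

Lemma card_H8 : #|H8| = 8.
Proof.
have val_Hperms p : p \in Hperms -> val (g128 p) = p.
  by move=> pH; rewrite val_g128 // (allP Hperms_sub _ pH).
have uniq_H : uniq [seq g128 p | p <- Hperms].
  by rewrite map_inj_in_uniq ?Hperms_uniq // => p q pH qH /(congr1 val); rewrite !val_Hperms.
rewrite -size_Hperms -(size_map g128) -(card_uniqP uniq_H); apply: eq_card => x.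
rewrite mem_H8; apply/idP/mapP => [xH|[p pH ->]]; last by rewrite val_Hperms.
by exists (val x) => //; apply: val_inj; rewrite val_Hperms.
Qed.

Lemma abelem_H8 : 2.-abelem H8.
Proof.
apply/abelemP=> //; split=> [|x]; last first.
  rewrite mem_H8 => xH; apply: val_inj.
  by case/and3P: (allP (allP Hperms_elementary _ xH) _ xH) => _ _ /eqP.
apply/centsP=> x; rewrite mem_H8 => xH y; rewrite mem_H8 => yH; apply: val_inj.
by case/and3P: (allP (allP Hperms_elementary _ yH) _ xH) => _ /eqP.
Qed.

Definition conj_in_H (u z : seq nat) : bool := pmul (pmul u z) (pinv u) \in Hperms.

Lemma mem_conj_H8 (u z : G128) : (z \in H8 :^ u) = conj_in_H (val u) (val z).
Proof. by rewrite mem_conjg conjgE invgK mem_H8 mulgA. Qed.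

Definition meet_conj (u : seq nat) : seq (seq nat) := [seq w <- Hperms | conj_in_H u w].

Lemma meets_nontrivial : let Ms := undup [seq meet_conj u | u <- Gelems] in
  all (fun M => all (fun M' => has (fun w => (w != pone) && (w \in M')) M) Ms) Ms.
Proof. by vm_compute. Qed.

Lemma nontrivial_meet3_H8 (u v : G128) :
  exists2 w, w != 1 & [/\ w \in H8, w \in H8 :^ u & w \in H8 :^ v].
Proof.
have Mu : meet_conj (val u) \in undup [seq meet_conj u | u <- Gelems].
  by rewrite mem_undup map_f ?ssvalP.
have Mv : meet_conj (val v) \in undup [seq meet_conj u | u <- Gelems].
  by rewrite mem_undup map_f ?ssvalP.
have /hasP[w] := allP (allP meets_nontrivial _ Mu) _ Mv.
rewrite !mem_filter => /andP[uw wH] /and3P[w1 vw _].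
have wG := allP Hperms_sub _ wH.
exists (g128 w).
  by apply: contraNneq w1 => /(congr1 val); rewrite (val_g128 wG) => ->.
by rewrite !mem_conj_H8 mem_H8 (val_g128 wG); split.
Qed.

Lemma nontrivial_meet3_conj_H8 (a b d : G128) :
  exists2 z, z != 1 & [/\ z \in H8 :^ a, z \in H8 :^ b & z \in H8 :^ d].
Proof.
have [w w1 [wH wb wd]] := nontrivial_meet3_H8 (b * a^-1) (d * a^-1).
exists (w ^ a); first by rewrite conjg_eq1.
have conjE c : H8 :^ c = (H8 :^ (c * a^-1)) :^ a by rewrite -conjsgM mulgKV.
by rewrite memJ_conjg (conjE b) (conjE d) !memJ_conjg.
Qed.

Lemma base_trivial : all (fun z =>
  all (fun x => conj_in_H x z) [:: pone; gb; gc; pmul gc gc] ==> (z == pone)) Gelems.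
Proof. by vm_compute. Qed.

Lemma gens_in_G : (gb \in Gelems) && (gc \in Gelems).
Proof. by vm_compute. Qed.

Definition base128 : 4.-tuple G128 :=
  [tuple 1; g128 gb; g128 gc; g128 gc * g128 gc].

Lemma mem_bigcap_seq (T : finType) (I : eqType) (r : seq I) (F : I -> {set T}) z :
  (z \in \bigcap_(i <- r) F i) = all (fun i => z \in F i) r.
Proof. by elim: r => [|a r IH]; rewrite ?big_nil ?big_cons ?in_setT ?in_setI //= IH. Qed.

Lemma bigcap_base128 : \bigcap_(x <- base128) H8 :^ x = 1.
Proof.
apply/setP=> z; rewrite in_set1 mem_bigcap_seq; apply/idP/eqP=> [|->]; last first.
  by apply/allP=> x _; rewrite group1.
case/andP: gens_in_G => bG cG.
rewrite /= !mem_conj_H8 val_mulg (val_g128 bG) (val_g128 cG) => zbase.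
apply: val_inj; apply/eqP; rewrite val_oneg.
exact: (implyP (allP base_trivial _ (ssvalP z))).
Qed.

Lemma gcore_H8 : gcore H8 [set: G128] = 1.
Proof.
apply/trivgP; rewrite -bigcap_base128; apply/subsetP=> z /bigcapP zH.
by rewrite mem_bigcap_seq; apply/allP=> x _; apply: zH.
Qed.

Lemma no_trivial_meet3_H8 :
  ~ (exists x y, x \in [set: G128] /\ y \in [set: G128] /\ H8 :&: H8 :^ x :&: H8 :^ y = 1).
Proof.
case=> x [y [_ [_ Hxy1]]]; have [w w1 [wH wx wy]] := nontrivial_meet3_H8 x y.
suff : w \in [1 G128] by rewrite inE (negbTE w1).
by rewrite -Hxy1 !in_setI wH wx wy.
Qed.

Lemma base_size_H8 : base_size_is [set: G128] H8 4.
Proof.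
split; first by exists base128; split; [apply/allP=> x _; rewrite inE | exact: bigcap_base128].
move=> c /andP[c0 c4] [xs [_ xs1]].
have [z z1 [z0 z1' z2]] := nontrivial_meet3_conj_H8 (nth 1 xs 0) (nth 1 xs 1) (nth 1 xs 2).
suff : z \in [1 G128] by rewrite inE (negbTE z1).
rewrite -xs1 mem_bigcap_seq; apply/allP=> x x_xs; rewrite -(nth_index 1 x_xs).
have ix : index x xs < c by rewrite -{2}(size_tuple xs) index_mem.
by move: (leq_trans ix c4); case: (index x xs) => [|[|[|i]]].
Qed.

(* Coordinates in H with respect to h1, h2, ga, each of which moves exactly
   one of the points 8, 4, 2. *)
Definition hcoord (x : seq nat) : seq bool := [seq nth 0 x i != i | i <- [:: 8; 4; 2]].
Definition hpair (a x : seq nat) : bool :=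
  odd (count id [seq c.1 && c.2 | c <- zip (hcoord a) (hcoord x)]).

Definition beta128 (a x : G128) : bool := hpair (val a) (val x).

Lemma hpair_mull : all (fun a => all (fun a' => all (fun x =>
  hpair (pmul a a') x == hpair a x (+) hpair a' x) Hperms) Hperms) Hperms.
Proof. by vm_compute. Qed.

Lemma hpair_mulr : all (fun a => all (fun x => all (fun x' =>
  hpair a (pmul x x') == hpair a x (+) hpair a x') Hperms) Hperms) Hperms.
Proof. by vm_compute. Qed.

Lemma hpair_nondeg : all (fun x => all (fun x' =>
  (x != x') ==> has (fun a => hpair a x != hpair a x') Hperms) Hperms) Hperms.
Proof. by vm_compute. Qed.

Lemma beta128Ml a a' x : a \in H8 -> a' \in H8 -> x \in H8 ->
  beta128 (a * a') x = beta128 a x (+) beta128 a' x.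
Proof.
by rewrite !mem_H8 => aH a'H xH; apply/eqP; apply: (allP (allP (allP hpair_mull _ aH) _ a'H)).
Qed.

Lemma beta128Mr a x x' : a \in H8 -> x \in H8 -> x' \in H8 ->
  beta128 a (x * x') = beta128 a x (+) beta128 a x'.
Proof.
by rewrite !mem_H8 => aH xH x'H; apply/eqP; apply: (allP (allP (allP hpair_mulr _ aH) _ xH)).
Qed.

Lemma beta128_nondeg x x' : x \in H8 -> x' \in H8 -> x != x' ->
  exists2 a, a \in H8 & beta128 a x != beta128 a x'.
Proof.
rewrite !mem_H8 => xH x'H neq_x; have neq_val : val x != val x'.
  by apply: contra neq_x => /eqP/val_inj->.
have /hasP[p pH] := implyP (allP (allP hpair_nondeg _ xH) _ x'H) neq_val.
by exists (SeqSub (allP Hperms_sub _ pH)); rewrite ?mem_H8.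
Qed.

Definition stab (g : seq nat) : seq (seq nat * seq nat) :=
  [seq xy <- [seq (x, y) | x <- Hperms, y <- Hperms] | pmul (pmul xy.1 g) xy.2 == g].

Definition trivial_on (a1 a2 : seq nat) (St : seq (seq nat * seq nat)) : bool :=
  all (fun xy => ~~ (hpair a1 xy.1 (+) hpair a2 xy.2)) St.

Lemma trivial_on_stabP (a1 a2 g : G128) : trivial_on (val a1) (val a2) (stab (val g)) ->
  forall x y, x \in H8 -> y \in H8 -> x * g * y = g -> pair_char beta128 (a1, a2) (x, y) = 1%R.
Proof.
move=> triv x y; rewrite !mem_H8 => xH yH xgy.
have xy_stab : (val x, val y) \in stab (val g).
  by rewrite mem_filter; apply/andP; split; [rewrite -!val_mulg xgy | apply: allpairs_f].
move/negbTE: (allP triv _ xy_stab).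
by rewrite /pair_char /beta128 /= -signr_addb => ->.
Qed.

Lemma chars_trivial_on_stab : let Sts := [seq stab g | g <- Gelems] in
  all (fun a1 => all (fun a2 => has (trivial_on a1 a2) Sts) Hperms) Hperms.
Proof. by vm_compute. Qed.

Lemma chars_in_G128 a : a \in setX H8 H8 ->
  exists2 g, g \in [set: G128] & forall x y, x \in H8 -> y \in H8 -> x * g * y = g ->
    pair_char beta128 a (x, y) = 1%R.
Proof.
case: a => a1 a2 /setXP[]; rewrite !mem_H8 => a1H a2H.
have /hasP[St /mapP[p pG ->] triv] := allP (allP chars_trivial_on_stab _ a1H) _ a2H.
by exists (SeqSub pG); rewrite ?inE //; apply: trivial_on_stabP.
Qed.

Lemma nontrivial_char_trivial_on_stab :
  has (fun g => has (fun a => has (hpair a) Hperms && trivial_on pone a (stab g)) Hperms) Gelems.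
Proof. by vm_compute. Qed.

Lemma depth_H8 : depth_is [set: G128] H8 3.
Proof.
have sHG := subsetT H8.
split; first exact: has_depth3 sHG beta128Ml beta128Mr beta128_nondeg chars_in_G128.
have /hasP[p0 p0G /hasP[q0 q0H /andP[/hasP[y0 y0H q0y0] triv0]]] := nontrivial_char_trivial_on_stab.
pose g0 : G128 := SeqSub p0G; pose a0 : G128 := SeqSub (allP Hperms_sub _ q0H).
pose psi y : algC := ((-1) ^+ beta128 a0 y)%R.
have sum_psi0 : (\sum_(y in H8) psi y = 0)%R.
  apply: (sum_sign_pairing_eq0 beta128Mr (y0 := SeqSub (allP Hperms_sub _ y0H))).
  - by rewrite mem_H8.
  - by rewrite mem_H8.
  - exact: q0y0.
have psi_stab x y : x \in H8 -> y \in H8 -> x * g0 * y = g0 -> psi y = 1%R.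
  move=> xH yH /(trivial_on_stabP (a1 := 1) (a2 := a0) (g := g0) triv0 xH yH).
  by rewrite /pair_char /beta128 /= expr0 mul1r.
move=> [|[|[|n]]] // _.
  exact: not_has_depth1 sHG (in_setT g0) sum_psi0 psi_stab.
exact: not_has_depth2 sHG (in_setT g0) sum_psi0 psi_stab.
Qed.

Theorem mainTheorem16 :
  exists (gT : finGroupType) (G H : {group gT}),
    #|G| = (2 ^ 7)%N /\ H \subset G /\ 2.-abelem H /\ #|H| = 8%N /\
    gcore H G = [1 gT] /\
    depth_is G H 3 /\ base_size_is G H 4 /\
    ~ (exists x y, x \in G /\ y \in G /\ H :&: H :^ x :&: H :^ y = [1 gT]).
Proof.
exists G128, [set: G128]%G, H8.
split; first exact: card_G128.
split; first exact: subsetT.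
split; first exact: abelem_H8.
split; first exact: card_H8.
split; first exact: gcore_H8.
split; first exact: depth_H8.
split; first exact: base_size_H8.
exact: no_trivial_meet3_H8.
Qed.
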